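(* Let $d\ge 2$ and let $V$ be a finite subset of the unit sphere $S^{d-1}\subset\mathbb{R}^d$ which is centrally symmetric, i.e. $v\in V$ implies $-v\in V$. Let $V^+$ be the set of vectors in $V$ whose first non-zero coordinate is positive, so that $V$ is the disjoint union of $V^+$ and $-V^+$. Let $\mathcal{A}\subseteq\mathbb{R}^d$ be a measurable set which is centrally antisymmetric, i.e. $\mathcal{A}\cap(-\mathcal{A})=\emptyset$. Let $T$ be a random orthogonal matrix uniformly distributed on $O(d)$ (normalized Haar measure), and let $(r_v)_{v\in V}$ be independent random variables, each with the $\chi$-distribution with $d$ degrees of freedom, independent of $T$. Define $$\hat p^V=\frac{1}{|V|}\sum_{v\in V} I_{\mathcal{A}}(r_v\,Tv),\qquad \hat p^V_{AT}=\frac{1}{|V|}\sum_{v\in V^+}\Big(I_{\mathcal{A}}(r_v\,Tv)+I_{\mathcal{A}}(-r_v\,Tv)\Big).$$ Then $\operatorname{Var}(\hat p^V_{AT})\le \operatorname{Var}(\hat p^V)$.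
   Context: $I_{\mathcal{A}}$ denotes the indicator function of $\mathcal{A}$. The $\chi$-distribution with $d$ degrees of freedom is the distribution of $\|Z\|$ for $Z$ a $d$-dimensional standard normal vector. Both $\hat p^V$ and $\hat p^V_{AT}$ are estimators of $P\{Z\in\mathcal{A}\}$ for $Z\sim N_d(0,I)$. *)

From HB Require Import structures.
From mathcomp Require Import all_boot all_order all_algebra.
From mathcomp Require Import all_classical all_reals all_analysis.

Set Implicit Arguments.
Unset Strict Implicit.
Unset Printing Implicit Defensive.

Import Order.TTheory GRing.Theory Num.Theory.
Local Open Scope classical_set_scope.
Local Open Scope ring_scope.

(* For m = 1 (column vectors)
   this is the Borel sigma-algebra of R^d; for m = d it is the Borel
   sigma-algebra of the matrix space R^(d x d). *)
Definition mx_gen (R : realType) (n m : nat) : set (set 'M[R]_(n, m)) :=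
  [set S | exists (i : 'I_n) (j : 'I_m) (B : set R),
             measurable B /\ S = [set M : 'M[R]_(n, m) | B (M i j)]].

Definition mx_measurable (R : realType) (n m : nat) (S : set 'M[R]_(n, m)) : Prop :=
  <<s (@mx_gen R n m) >> S.

Definition is_orthogonal (R : realType) (d : nat) (Q : 'M[R]_d) : Prop :=
  Q^T *m Q = 1%:M.

Definition on_sphere (R : realType) (d : nat) (v : 'cV[R]_d) : Prop :=
  \sum_(i < d) v i 0 ^+ 2 = 1.

Definition first_nz_pos (R : realType) (d : nat) (v : 'cV[R]_d) : bool :=
  [exists i : 'I_d, (0 < v i 0) && [forall j : 'I_d, (j < i)%N ==> (v j 0 == 0)]].

Definition Vplus (R : realType) (d : nat) (V : seq 'cV[R]_d) : seq 'cV[R]_d :=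
  [seq v <- V | first_nz_pos v].

Definition chi_kernel (R : realType) (d : nat) (x : R) : R :=
  if 0 < x then x ^+ d.-1 * expR (- (x ^+ 2) / 2) else 0.

Definition chi_norm_const (R : realType) (d : nat) : R :=
  fine (\int[@lebesgue_measure R]_(x in [set: R]) (chi_kernel d x)%:E)%E.

Definition chi_pdf (R : realType) (d : nat) (x : R) : R :=
  chi_kernel d x / chi_norm_const R d.

Definition chi_distributed (R : realType) (dO : measure_display)
    (Omega : measurableType dO) (P : probability Omega R) (d : nat)
    (X : Omega -> R) : Prop :=
  measurable_fun [set: Omega] X /\
  forall B : set R, measurable B ->
    P (X @^-1` B) = (\int[@lebesgue_measure R]_(x in B) (chi_pdf d x)%:E)%E.

(* T : Omega -> 'M_d is uniformly (normalized Haar) distributed on O(d):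
   T is a random element of O(d) whose law is invariant under left
   multiplication by every orthogonal matrix (this characterizes the
   normalized Haar measure on the compact group O(d)). *)
Definition haar_orthogonal (R : realType) (dO : measure_display)
    (Omega : measurableType dO) (P : probability Omega R) (d : nat)
    (T : Omega -> 'M[R]_d) : Prop :=
  (forall i j, measurable_fun [set: Omega] (fun w => T w i j)) /\
  (forall w, is_orthogonal (T w)) /\
  (forall Q : 'M[R]_d, is_orthogonal Q ->
     forall B : set 'M[R]_d, mx_measurable B ->
       P (T @^-1` B) = P ((fun w => Q *m T w) @^-1` B)).

(* Mutual independence of T and the family (r v)_(v in V) (V duplicate free):
   the product rule for all events generated by them. *)
Definition indep_mx_family (R : realType) (dO : measure_display)
    (Omega : measurableType dO) (P : probability Omega R) (d : nat)
    (T : Omega -> 'M[R]_d) (V : seq 'cV[R]_d) (r : 'cV[R]_d -> Omega -> R) : Prop :=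
  forall (B : set 'M[R]_d) (A : 'cV[R]_d -> set R),
    mx_measurable B -> (forall v, measurable (A v)) ->
    P (T @^-1` B `&` \bigcap_(v in [set` V]) (r v @^-1` A v)) =
    (P (T @^-1` B) * \prod_(v <- V) P (r v @^-1` A v))%E.

Definition p_hat (R : realType) (dO : measure_display) (Omega : measurableType dO)
    (d : nat) (A : set 'cV[R]_d) (V : seq 'cV[R]_d)
    (T : Omega -> 'M[R]_d) (r : 'cV[R]_d -> Omega -> R) : Omega -> R :=
  fun w => (size V)%:R^-1 * \sum_(v <- V) \1_A (r v w *: (T w *m v)).

Definition p_hat_AT (R : realType) (dO : measure_display) (Omega : measurableType dO)
    (d : nat) (A : set 'cV[R]_d) (V : seq 'cV[R]_d)
    (T : Omega -> 'M[R]_d) (r : 'cV[R]_d -> Omega -> R) : Omega -> R :=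
  fun w => (size V)%:R^-1 * \sum_(v <- Vplus V)
             (\1_A (r v w *: (T w *m v)) + \1_A (- (r v w *: (T w *m v)))).

From HB Require Import structures.
From mathcomp Require Import all_boot all_order all_algebra.
From mathcomp Require Import all_classical all_reals all_analysis.
From mathcomp Require Import measurable_realfun.

Import Order.TTheory GRing.Theory Num.Theory.
Local Open Scope classical_set_scope.
Local Open Scope ring_scope.

(* Index both estimators by the pairs [j = (v, +-)] with [v] in [V^+]: each is
   [|V|^-1] times a sum of indicators of events [E_j] (for [p_hat]) or [F_j]
   (for [p_hat_AT]).  As the [r_v] are i.i.d. and independent of [T], the law
   of [(T, r_z, r_z')] is the same for all [z <> z'] in [V].  Hence
   [P(F_j) = P(E_j)], and [P(F_i & F_j) = P(E_i & E_j)] when [i] and [j] come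
   from different vectors of [V^+], while [F_(v,+)] and [F_(v,-)] are disjoint
   because [A] and [-A] are.  So the means agree and the second moment of
   [p_hat_AT] is the smaller one. *)

Section MatrixScalarSpace.
Variables (R : realType) (d : nat).

Definition sqmx := 'M[R]_d.
HB.instance Definition _ := Choice.on sqmx.
HB.instance Definition _ := isPointed.Build sqmx 0.
Definition sqmx_borel := @g_sigma_algebraType sqmx (@mx_gen R d d).

Definition colvec := 'cV[R]_d.
HB.instance Definition _ := Choice.on colvec.
HB.instance Definition _ := isPointed.Build colvec 0.
Definition colvec_borel := @g_sigma_algebraType colvec (@mx_gen R d 1).

Definition mxRR := (sqmx * R * R)%type.
HB.instance Definition _ := Choice.on mxRR.
HB.instance Definition _ := isPointed.Build mxRR (0, 0, 0).

Definition box3 : set (set mxRR) :=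
  [set S | exists B C D, mx_measurable B /\ measurable C /\ measurable D /\
                         S = B `*` C `*` D].
Definition mxRR_borel := g_sigma_algebraType box3.

Lemma measurable_box3 (B : set 'M[R]_d) (C D : set R) :
  mx_measurable B -> measurable C -> measurable D ->
  measurable (B `*` C `*` D : set mxRR_borel).
Proof. by move=> mB mC mD; apply: sub_sigma_algebra; exists B, C, D. Qed.

Lemma measurable_mxRR_entry (i j : 'I_d) :
  measurable_fun [set: mxRR_borel] (fun x => x.1.1 i j).
Proof.
move=> _ C mC; rewrite setTI.
have -> : (fun x : mxRR_borel => x.1.1 i j) @^-1` C =
          [set M : 'M[R]_d | C (M i j)] `*` setT `*` setT.
  by apply/seteqP; split => [x /= Cx|x /= [[Cx _] _]]; [split|].
by apply: measurable_box3 => //; apply: sub_sigma_algebra; exists i, j, C.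
Qed.

Lemma measurable_mxRR_mid : measurable_fun [set: mxRR_borel] (fun x => x.1.2).
Proof.
move=> _ C mC; rewrite setTI.
have -> : (fun x : mxRR_borel => x.1.2) @^-1` C = setT `*` C `*` setT.
  by apply/seteqP; split => [x /= Cx|x /= [[_ Cx] _]]; [split|].
by apply: measurable_box3 => //; exact: (@measurableT _ sqmx_borel).
Qed.

Lemma measurable_mxRR_last : measurable_fun [set: mxRR_borel] (fun x => x.2).
Proof.
move=> _ C mC; rewrite setTI.
have -> : (fun x : mxRR_borel => x.2) @^-1` C = setT `*` setT `*` C.
  by apply/seteqP; split => [x /= Cx|x /= [[_ _] Cx]].
by apply: measurable_box3 => //; exact: (@measurableT _ sqmx_borel).
Qed.

Lemma measurable_scale_mulmx (u : 'cV[R]_d) (s : mxRR_borel -> R)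
    (A : set 'cV[R]_d) :
  measurable_fun [set: mxRR_borel] s -> mx_measurable A ->
  measurable [set x : mxRR_borel | A (s x *: (x.1.1 *m u))].
Proof.
move=> ms mA.
have mf : measurable_fun [set: mxRR_borel]
    ((fun x => s x *: (x.1.1 *m u)) : mxRR_borel -> colvec_borel).
  apply: (@measurability _ _ mxRR_borel colvec_borel _ _ (@mx_gen R d 1)) => //.
  move=> _ [_ [i [j [C [mC ->]]]] <-]; rewrite setTI.
  have -> : (fun x : mxRR_borel => s x *: (x.1.1 *m u)) @^-1` [set M | C (M i j)] =
            (fun x => s x * \sum_k x.1.1 i k * u k j) @^-1` C.
    by apply/seteqP; split => x /=; rewrite !mxE.
  rewrite -[X in measurable X]setTI; apply: measurable_funM => //.
  apply: measurable_sum => k; apply: measurable_funM => //.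
  exact: measurable_mxRR_entry.
by rewrite -[X in measurable X]setTI; exact: (mf measurableT (A : set colvec_borel)).
Qed.

End MatrixScalarSpace.

Section ExchangeableTriples.
Variables (R : realType) (d : nat) (V : seq 'cV[R]_d).
Variables (dO : measure_display) (Omega : measurableType dO) (P : probability Omega R).
Variables (T : Omega -> 'M[R]_d) (r : 'cV[R]_d -> Omega -> R).
Hypothesis V_uniq : uniq V.
Hypothesis mT : forall i j, measurable_fun [set: Omega] (fun w => T w i j).
Hypothesis r_chi : forall v, v \in V -> chi_distributed P d (r v).
Hypothesis T_r_indep : indep_mx_family P T V r.

Lemma measurable_mx_rv : measurable_fun [set: Omega] (T : Omega -> sqmx_borel R d).
Proof.
apply: (@measurability _ _ Omega (sqmx_borel R d) _ _ (@mx_gen R d d)) => //.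
move=> _ [_ [i [j [C [mC ->]]]] <-].
have := mT i j measurableT C mC.
by congr measurable; apply/seteqP; split => w.
Qed.

Definition triple_rv a b : Omega -> mxRR_borel R d := fun w => (T w, r a w, r b w).

Lemma measurable_triple_rv a b : a \in V -> b \in V ->
  measurable_fun [set: Omega] (triple_rv a b).
Proof.
move=> aV bV.
apply: (@measurability _ _ Omega (mxRR_borel R d) _ _ (@box3 R d)) => //.
move=> _ [_ [B [C [D [mB [mC [mD ->]]]]]] <-].
have -> : [set: Omega] `&` triple_rv a b @^-1` (B `*` C `*` D) =
    ((T : Omega -> sqmx_borel R d) @^-1` B `&` r a @^-1` C) `&` r b @^-1` D.
  by apply/seteqP; split => w /=; [move=> [_ [[]]]|move=> [[]]].
apply: measurableI; [apply: measurableI|].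
- by rewrite -[X in measurable X]setTI; exact: measurable_mx_rv.
- by rewrite -[X in measurable X]setTI; case: (r_chi _ aV) => + _; exact.
- by rewrite -[X in measurable X]setTI; case: (r_chi _ bV) => + _; exact.
Qed.

Lemma triple_rv_box a b (B : set 'M[R]_d) (C D : set R) :
  a \in V -> b \in V -> a != b ->
  mx_measurable B -> measurable C -> measurable D ->
  P (triple_rv a b @^-1` (B `*` C `*` D)) =
  (P (T @^-1` B) * (\int[@lebesgue_measure R]_(x in C) (chi_pdf d x)%:E)
     * (\int[@lebesgue_measure R]_(x in D) (chi_pdf d x)%:E))%E.
Proof.
move=> aV bV ab mB mC mD.
pose Av v := if v == a then C else if v == b then D else setT.
have mAv v : measurable (Av v) by rewrite /Av; case: ifP => // _; case: ifP.
have -> : triple_rv a b @^-1` (B `*` C `*` D) =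
          T @^-1` B `&` \bigcap_(v in [set` V]) (r v @^-1` Av v).
  apply/seteqP; split => w /=.
  - move=> [[Bw Cw] Dw]; split => // v _; rewrite /Av.
    by case: ifP => [/eqP->|_] //; case: ifP => [/eqP->|_].
  - move=> [Bw rA]; split; [split => //|].
    + by have := rA a aV; rewrite /Av eqxx.
    + by have := rA b bV; rewrite /Av eqxx eq_sym (negbTE ab).
rewrite T_r_indep // (bigD1_seq a) //= -big_filter (bigD1_seq b) ?filter_uniq //;
  last by rewrite mem_filter eq_sym ab.
rewrite big_seq_cond big1 ?mule1; last first.
  move=> v /andP[]; rewrite mem_filter => /andP[va _] vb.
  by rewrite /Av (negbTE va) (negbTE vb) preimage_setT probability_setT.
rewrite /Av eqxx eq_sym (negbTE ab) eqxx.
case: (r_chi _ aV) => _ ->//; case: (r_chi _ bV) => _ ->//.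
by rewrite /= mule1 muleA.
Qed.

(* Both laws are determined by their values on the pi-system of boxes, where
   they agree by independence and equidistribution of the [r v]. *)
Lemma triple_rv_law a b a' b' : a \in V -> b \in V -> a != b ->
  a' \in V -> b' \in V -> a' != b' ->
  forall S : set (mxRR_borel R d), measurable S ->
  P (triple_rv a b @^-1` S) = P (triple_rv a' b' @^-1` S).
Proof.
move=> aV bV ab aV' bV' ab' S mS.
pose law1 := distribution P (mfun_Sub (mem_set (measurable_triple_rv _ _ aV bV))).
pose law2 := distribution P (mfun_Sub (mem_set (measurable_triple_rv _ _ aV' bV'))).
apply: (@measure_unique _ R (mxRR_borel R d) (@box3 R d) (fun _ => setT) erefl
          _ _ _ law1 law2 _ _ S mS).
- move=> X Y [B [C [D [mB [mC [mD ->]]]]]] [B' [C' [D' [mB' [mC' [mD' ->]]]]]].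
  exists (B `&` B'), (C `&` C'), (D `&` D').
  split; first exact: (@measurableI _ (sqmx_borel R d)).
  do 2 (split; first exact: measurableI).
  by apply/seteqP; split => x /= => [[[[? ?] ?] [[? ?] ?]]|[[[? ?] [? ?]] [? ?]]].
- move=> _; exists setT, setT, setT.
  split; first exact: (@measurableT _ (sqmx_borel R d)).
  by do 2 split => //; apply/seteqP; split.
- by rewrite bigcup_const.
- move=> X [B [C [D [mB [mC [mD ->]]]]]].
  change (P (triple_rv a b @^-1` (B `*` C `*` D)) =
          P (triple_rv a' b' @^-1` (B `*` C `*` D))).
  by rewrite !triple_rv_box.
- move=> _; change (P (triple_rv a b @^-1` setT) < +oo)%E.
  by rewrite preimage_setT probability_setT ltry.
Qed.

End ExchangeableTriples.
Arguments triple_rv {R d dO Omega} T r a b _.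
Arguments measurable_triple_rv {R d V dO Omega P T r} mT r_chi {a b}.
Arguments triple_rv_law {R d V dO Omega P T r} V_uniq mT r_chi T_r_indep {a b a' b'}.

Section PositiveHalf.
Variables (R : realType) (d : nat).

Lemma first_nz_pos_at (v : 'cV[R]_d) (i : 'I_d) : v i 0 != 0 ->
  (forall j : 'I_d, (j < i)%N -> v j 0 = 0) -> first_nz_pos v = (0 < v i 0).
Proof.
move=> vi0 lt_i0; apply/existsP/idP => [[k /andP[vk /forallP k_first]]|vi].
- have [ki|ik|/val_inj <- //] := ltngtP k i.
  + by rewrite lt_i0 // ltxx in vk.
  + by move/implyP: (k_first i) => /(_ ik) /eqP vi; rewrite vi eqxx in vi0.
- by exists i; rewrite vi; apply/forallP => j; apply/implyP => ji; rewrite lt_i0.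
Qed.

Lemma first_nz_posN (v : 'cV[R]_d) : on_sphere v ->
  first_nz_pos (- v) = ~~ first_nz_pos v.
Proof.
move=> sv.
have [i0 vi0] : exists i, v i 0 != 0.
  apply/existsP; apply: contraT; rewrite negb_exists => /forallP v0.
  move: sv; rewrite /on_sphere big1 => [/eqP|i _]; first by rewrite eq_sym oner_eq0.
  by move/negPn/eqP: (v0 i) => ->; rewrite expr0n.
have [i vi imin] :=
  @arg_minnP _ i0 (fun i : 'I_d => v i 0 != 0) (fun i : 'I_d => nat_of_ord i) vi0.
have lt_i0 (j : 'I_d) : (j < i)%N -> v j 0 = 0.
  by move=> ji; apply/eqP; apply: contraTT ji => /imin; rewrite leqNgt.
rewrite (@first_nz_pos_at v i vi lt_i0) (@first_nz_pos_at (- v) i); first last.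
- by move=> j ji; rewrite mxE lt_i0 // oppr0.
- by rewrite mxE oppr_eq0.
by rewrite mxE oppr_gt0 -leNgt le_eqVlt (negbTE vi).
Qed.

Variable V : seq 'cV[R]_d.

Lemma Vplus_subset : {subset Vplus V <= V}.
Proof. by move=> v; rewrite mem_filter => /andP[]. Qed.

Hypothesis V_sphere : forall v, v \in V -> on_sphere v.

Lemma perm_Vplus : uniq V -> (forall v, v \in V -> - v \in V) ->
  perm_eq V (Vplus V ++ map -%R (Vplus V)).
Proof.
move=> V_uniq VN.
rewrite -(perm_filterC (@first_nz_pos R d) V) /Vplus perm_cat2l.
apply: uniq_perm; first exact: filter_uniq.
  by rewrite map_inj_uniq ?filter_uniq //; exact: oppr_inj.
move=> x; rewrite mem_filter /=; apply/andP/mapP => [[xN xV]|[y]].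
- exists (- x); last by rewrite opprK.
  by rewrite mem_filter first_nz_posN ?VN ?andbT //; exact: V_sphere.
- rewrite mem_filter => /andP[yP yV] ->.
  by rewrite first_nz_posN ?VN ?yP //; exact: V_sphere.
Qed.

Lemma Vplus_neq_opp v w : v \in Vplus V -> w \in Vplus V -> v != - w.
Proof.
rewrite !mem_filter => /andP[vP vV] /andP[wP wV].
by apply: contraTneq vP => ->; rewrite first_nz_posN ?wP //; exact: V_sphere.
Qed.

End PositiveHalf.
Arguments Vplus_subset {R d V}.
Arguments perm_Vplus {R d V}.
Arguments Vplus_neq_opp {R d V} V_sphere {v w}.

Section IndicatorSums.
Variables (R : realType) (dO : measure_display) (Omega : measurableType dO).
Variable P : probability Omega R.

Lemma integral_scaled_indic (c : R) (E : set Omega) : 0 <= c -> measurable E ->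
  (\int[P]_w (c * \1_E w)%:E = c%:E * P E)%E.
Proof.
move=> c0 mE; under eq_integral => w _ do rewrite EFinM.
rewrite ge0_integralZl ?integral_indic ?setIT //.
by apply/measurable_EFinP; exact: measurable_indic.
Qed.

Lemma bounded_Lfun2 (f : Omega -> R) (M : R) : measurable_fun setT f ->
  (forall w, `|f w| <= M) -> f \in Lfun P 2%:E.
Proof.
move=> mf fM; rewrite inE; apply/andP; split; rewrite inE /=; first exact: mf.
rewrite /finite_norm unlock; apply: poweR_lty.
rewrite (_ : (fun x => _) = (fun w => ((`|f w|) ^+ 2)%:E))%E; last first.
  by apply/funext => w /=; rewrite powR_mulrn.
apply: (@le_lt_trans _ _ (\int[P]_w (cst ((M ^+ 2)%:E)) w))%E.
  apply: ge0_le_integral => //.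
  - by apply/measurable_EFinP; apply: measurable_funX; exact: measurableT_comp.
  - by move=> w _; rewrite lee_fin /= lerXn2r ?nnegrE ?(le_trans _ (fM w)).
by rewrite integral_cst // lte_mul_pinfty // ?lee_fin ?sqr_ge0 // ltey_eq fin_num_measure.
Qed.

Lemma measurable_sum_indic (J : eqType) (js : seq J) (E : J -> set Omega) :
  {in js, forall j, measurable (E j)} ->
  measurable_fun setT (fun w => \sum_(j <- js) \1_(E j) w : R).
Proof.
move=> mE; have -> : (fun w => \sum_(j <- js) \1_(E j) w : R) =
    (fun w => \sum_(j <- js) if j \in js then \1_(E j) w else 0).
  by apply/funext => w; rewrite big_seq big_mkcond.
apply: measurable_sum => j.
by case: (boolP (j \in js)) => [/mE mEj|_]; [exact: measurable_indic|exact: measurable_cst].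
Qed.

Lemma integral_sum_scaled_indic (J : eqType) (js : seq J) (c : R) (E : J -> set Omega) : 0 <= c ->
  {in js, forall j, measurable (E j)} ->
  (\int[P]_w (\sum_(j <- js) c * \1_(E j) w)%:E = \sum_(j <- js) c%:E * P (E j))%E.
Proof.
move=> c0 mE.
under eq_integral => w _ do rewrite -sumEFin big_seq big_mkcond /=.
rewrite ge0_integral_sum //; first last.
- by move=> j w _; case: ifP => // _; rewrite lee_fin mulr_ge0 ?indic_ge0.
- move=> j; case: (boolP (j \in js)) => [/mE mEj|_]; last exact: measurable_cst.
  apply/measurable_EFinP; apply: measurable_funM => //; exact: measurable_indic.
rewrite [RHS]big_seq [RHS]big_mkcond; apply: eq_bigr => j _ /=.
by case: ifPn => [/mE/integral_scaled_indic->|_]; rewrite ?integral0.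
Qed.

Definition indic_sum {J : eqType} (js : seq J) (c : R) (E : J -> set Omega) :
  Omega -> R := fun w => c * \sum_(j <- js) \1_(E j) w.

Section Families.
Variables (J : eqType) (js : seq J) (c : R).
Hypothesis c_ge0 : 0 <= c.

Variable E : J -> set Omega.
Hypothesis mE : {in js, forall j, measurable (E j)}.

Lemma indic_sum_Lfun2 : indic_sum js c E \in Lfun P 2%:E.
Proof.
apply: (@bounded_Lfun2 _ (c * (size js)%:R)).
  by apply: measurable_funM => //; exact: measurable_sum_indic.
move=> w; rewrite normrM ger0_norm // ler_wpM2l // -sum1_size natr_sum.
rewrite (le_trans (ler_norm_sum _ _ _)) // ler_sum // => j _.
by rewrite /indic; case: (w \in E j); rewrite ?normr1 ?normr0.
Qed.

Lemma expectation_indic_sum :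
  ('E_P[indic_sum js c E] = \sum_(j <- js) c%:E * P (E j))%E.
Proof.
rewrite unlock -integral_sum_scaled_indic //.
by apply: eq_integral => w _; rewrite /indic_sum mulr_sumr.
Qed.

Lemma expectation_indic_sum_sqr : ('E_P[indic_sum js c E ^+ 2] =
  \sum_(i <- js) \sum_(j <- js) (c ^+ 2)%:E * P (E i `&` E j))%E.
Proof.
pose G (p : J * J) := E p.1 `&` E p.2.
have mG : {in [seq (i, j) | i <- js, j <- js], forall p, measurable (G p)}.
  by move=> p /allpairsP[[i j] [/mE mEi /mE mEj ->]]; exact: measurableI.
rewrite unlock (_ : (\sum_(i <- js) _)%E =
    \sum_(p <- [seq (i, j) | i <- js, j <- js]) (c ^+ 2)%:E * P (G p))%E;
  last by rewrite big_allpairs.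
rewrite -(@integral_sum_scaled_indic _ _ _ _ (exprn_ge0 2 c_ge0) mG).
apply: eq_integral => w _; congr (_%:E).
rewrite big_allpairs (_ : (indic_sum js c E ^+ 2) w = indic_sum js c E w ^+ 2);
  last by rewrite !expr2.
rewrite /indic_sum exprMn (expr2 (\sum_(j <- js) _)) mulr_suml mulr_sumr.
apply: eq_bigr => i _; rewrite !mulr_sumr; apply: eq_bigr => j _.
by rewrite /G indicI mulrA.
Qed.

End Families.

Lemma variance_indic_sum_le (J : eqType) (js : seq J) (c : R)
    (E F : J -> set Omega) : 0 <= c ->
  {in js, forall j, measurable (E j)} -> {in js, forall j, measurable (F j)} ->
  {in js, forall j, P (F j) = P (E j)} ->
  {in js &, forall i j, P (F i `&` F j) <= P (E i `&` E j)}%E ->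
  ('V_P[indic_sum js c F] <= 'V_P[indic_sum js c E])%E.
Proof.
move=> c0 mE mF PFE PFFE.
rewrite !varianceE ?indic_sum_Lfun2 // !expectation_indic_sum //.
rewrite !expectation_indic_sum_sqr //.
have -> : (\sum_(j <- js) c%:E * P (F j) = \sum_(j <- js) c%:E * P (E j))%E.
  by apply: eq_big_seq => j /PFE ->.
apply: leeB => //; rewrite big_seq [leRHS]big_seq; apply: lee_sum => i iJ.
rewrite big_seq [leRHS]big_seq; apply: lee_sum => j jJ.
by rewrite lee_wpmul2l ?lee_fin ?exprn_ge0 ?PFFE.
Qed.

End IndicatorSums.
Arguments indic_sum {R dO Omega J} js c E _.

Section AntitheticEstimator.
Variables (R : realType) (d : nat) (V : seq 'cV[R]_d) (A : set 'cV[R]_d).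
Variables (dO : measure_display) (Omega : measurableType dO) (P : probability Omega R).
Variables (T : Omega -> 'M[R]_d) (r : 'cV[R]_d -> Omega -> R).
Hypothesis V_uniq : uniq V.
Hypothesis V_sphere : forall v, v \in V -> on_sphere v.
Hypothesis V_opp : forall v, v \in V -> - v \in V.
Hypothesis mA : mx_measurable A.
Hypothesis A_antisym : A `&` [set - x | x in A] = set0.
Hypothesis mT : forall i j, measurable_fun [set: Omega] (fun w => T w i j).
Hypothesis r_chi : forall v, v \in V -> chi_distributed P d (r v).
Hypothesis T_r_indep : indep_mx_family P T V r.

Definition hit (u z : 'cV[R]_d) : set Omega := [set w | A (r z w *: (T w *m u))].

Let hit_mid u z z' : hit u z = triple_rv T r z z' @^-1` [set x | A (x.1.2 *: (x.1.1 *m u))].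
Proof. by []. Qed.

Lemma measurable_hit u z : z \in V -> measurable (hit u z).
Proof.
move=> zV; rewrite (hit_mid u z z) -[X in measurable X]setTI.
apply: (measurable_triple_rv mT r_chi zV zV) => //.
exact: measurable_scale_mulmx (@measurable_mxRR_mid R d) mA.
Qed.

Lemma hit_law u z z' z2 z2' : z \in V -> z' \in V -> z != z' ->
  z2 \in V -> z2' \in V -> z2 != z2' -> P (hit u z) = P (hit u z2).
Proof.
move=> *; rewrite (hit_mid u z z') (hit_mid u z2 z2').
apply: (triple_rv_law V_uniq mT r_chi T_r_indep) => //.
exact: measurable_scale_mulmx (@measurable_mxRR_mid R d) mA.
Qed.

Lemma hitI_law u u' z z' z2 z2' : z \in V -> z' \in V -> z != z' ->
  z2 \in V -> z2' \in V -> z2 != z2' ->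
  P (hit u z `&` hit u' z') = P (hit u z2 `&` hit u' z2').
Proof.
move=> *.
have -> (a b : 'cV[R]_d) : hit u a `&` hit u' b = triple_rv T r a b @^-1`
    ([set x | A (x.1.2 *: (x.1.1 *m u))] `&` [set x | A (x.2 *: (x.1.1 *m u'))]).
  by [].
apply: (triple_rv_law V_uniq mT r_chi T_r_indep) => //.
by apply: measurableI; apply: measurable_scale_mulmx mA;
  [exact: measurable_mxRR_mid | exact: measurable_mxRR_last].
Qed.

Lemma hit_oppI u z : hit u z `&` hit (- u) z = set0.
Proof.
apply/seteqP; split => // w []; rewrite /hit /= mulmxN scalerN => Ax ANx.
have : (A `&` [set - x | x in A]) (r z w *: (T w *m u)).
  by split => //; exists (- (r z w *: (T w *m u))); rewrite ?opprK.
by rewrite A_antisym.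
Qed.

Definition signed (j : 'cV[R]_d * bool) : 'cV[R]_d := if j.2 then j.1 else - j.1.

Definition Vplus_pm : seq ('cV[R]_d * bool) :=
  [seq (v, b) | v <- Vplus V, b <- [:: true; false]].

(* For [j = (v, b)] and [s = signed j = +-v], [plain_event j] is the event
   [r_s T s \in A] of [p_hat], and [antithetic_event j] the event
   [+-r_v T v \in A] of [p_hat_AT]. *)
Definition plain_event j := hit (signed j) (signed j).
Definition antithetic_event j := hit (signed j) j.1.

Lemma Vplus_pm_fst {j} : j \in Vplus_pm -> j.1 \in Vplus V.
Proof. by case/allpairsP => -[v b] [vV _ ->]. Qed.

Lemma Vplus_pm_fst_mem {j} : j \in Vplus_pm -> j.1 \in V.
Proof. by move/Vplus_pm_fst/Vplus_subset. Qed.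

Lemma signed_mem {j} : j \in Vplus_pm -> signed j \in V.
Proof. by move/Vplus_pm_fst_mem; rewrite /signed; case: ifP => // _; exact: V_opp. Qed.

Lemma signed_neq {i j} : i \in Vplus_pm -> j \in Vplus_pm -> i.1 != j.1 ->
  signed i != signed j.
Proof.
move=> /Vplus_pm_fst iV /Vplus_pm_fst jV ij; rewrite /signed.
case: ifP => _; case: ifP => _; rewrite ?eqr_opp //.
- exact: (Vplus_neq_opp V_sphere iV jV).
- by rewrite eq_sym; exact: (Vplus_neq_opp V_sphere jV iV).
Qed.

Lemma Vplus_pm_fst_neq_opp {j} : j \in Vplus_pm -> j.1 != - j.1.
Proof. by move/Vplus_pm_fst => jV; exact: (Vplus_neq_opp V_sphere jV jV). Qed.

Lemma p_hat_indic_sum :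
  p_hat A V T r = indic_sum Vplus_pm (size V)%:R^-1 plain_event.
Proof.
apply/funext => w; rewrite /p_hat /indic_sum big_allpairs; congr (_ * _).
under [RHS]eq_bigr => v _ do rewrite big_cons big_seq1.
by rewrite (perm_big _ (perm_Vplus V_sphere V_uniq V_opp)) big_cat big_map big_split.
Qed.

Lemma p_hat_AT_indic_sum :
  p_hat_AT A V T r = indic_sum Vplus_pm (size V)%:R^-1 antithetic_event.
Proof.
apply/funext => w; rewrite /p_hat_AT /indic_sum big_allpairs; congr (_ * _).
apply: eq_bigr => v _; rewrite big_cons big_seq1.
by rewrite -scalerN -mulmxN.
Qed.

Lemma antithetic_event_law j : j \in Vplus_pm ->
  P (antithetic_event j) = P (plain_event j).
Proof.
move=> jW; rewrite /antithetic_event /plain_event /signed.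
case: ifP => // _; have jV := Vplus_pm_fst_mem jW.
by apply: (@hit_law _ j.1 (- j.1) (- j.1) j.1); rewrite ?V_opp ?Vplus_pm_fst_neq_opp // eq_sym Vplus_pm_fst_neq_opp.
Qed.

Lemma antithetic_eventI_law : {in Vplus_pm &, forall i j,
  P (antithetic_event i `&` antithetic_event j) <= P (plain_event i `&` plain_event j)}%E.
Proof.
move=> [v b] [u b'] iW jW; have [/= vu|vu] := eqVneq v u.
  subst u; have [<-|bb'] := eqVneq b b'.
    by rewrite !setIid antithetic_event_law.
  suff -> : antithetic_event (v, b) `&` antithetic_event (v, b') = set0.
    by rewrite measure0.
  rewrite /antithetic_event /signed /=.
  by clear iW jW; case: b b' bb' => -[] //= _; rewrite ?hit_oppI // setIC hit_oppI.
rewrite (hitI_law _ _ _ _ _ _ (Vplus_pm_fst_mem iW) (Vplus_pm_fst_mem jW) vu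
                     (signed_mem iW) (signed_mem jW)) //.
exact: signed_neq.
Qed.

End AntitheticEstimator.
Arguments signed_mem {R d V} V_opp {j}.
Arguments Vplus_pm_fst_mem {R d V j}.
Arguments measurable_hit {R d V A dO Omega P T r} mA mT r_chi {u z}.

Theorem theorem2 (R : realType) (d : nat) (V : seq 'cV[R]_d)
    (A : set 'cV[R]_d)
    (dO : measure_display) (Omega : measurableType dO) (P : probability Omega R)
    (T : Omega -> 'M[R]_d) (r : 'cV[R]_d -> Omega -> R) :
  (2 <= d)%N ->
  uniq V ->
  (forall v, v \in V -> on_sphere v) ->
  (forall v, v \in V -> - v \in V) ->
  mx_measurable A ->
  A `&` [set - x | x in A] = set0 ->
  haar_orthogonal P T ->
  (forall v, v \in V -> chi_distributed P d (r v)) ->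
  indep_mx_family P T V r ->
  ('V_P[p_hat_AT A V T r] <= 'V_P[p_hat A V T r])%E.
Proof.
move=> _ V_uniq V_sphere V_opp mA A_antisym [mT _] r_chi T_r_indep.
rewrite p_hat_indic_sum // p_hat_AT_indic_sum.
apply: variance_indic_sum_le; first by rewrite invr_ge0.
- by move=> j /(signed_mem V_opp) jV; exact: (measurable_hit mA mT r_chi jV).
- by move=> j /Vplus_pm_fst_mem jV; exact: (measurable_hit mA mT r_chi jV).
- exact: antithetic_event_law.
- exact: antithetic_eventI_law.
Qed.
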